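(* For all integers $n\ge1$, $k\ge0$, every sequence $\boldsymbol a$ of positive reals and all $t$, \[ \theta_{n;k}(t)=\sum_{j=0}^{k} t^j\,\theta_{n;j}(1)\,(1-t)^{k-j}\,\theta_{n;k-j}(0), \] where $\theta_{n;j}(1)=h_j(a_1,\dots,a_n)$ is the complete homogeneous symmetric polynomial and $\theta_{n;j}(0)=e_j(a_1,\dots,a_n)$ is the elementary symmetric polynomial.
   Context: Let $\boldsymbol a=(a_j)_{j\ge1}$ be a sequence of positive reals. For integers $n\ge1$, $k\ge0$ let $\mathcal M_{n,k}=\{(\ell_1,\dots,\ell_k)\in\mathbb N^k: n\ge\ell_1\ge\cdots\ge\ell_k\ge1\}$. For $\vec\ell\in\mathcal M_{n,k}$ let $\sigma(\vec\ell)=|\{1\le j\le k-1:\ell_j=\ell_{j+1}\}|$ and $w(\vec\ell)=\prod_{j=1}^k a_{\ell_j}$. Define $\theta_{n;k}(t)=\sum_{\vec\ell\in\mathcal M_{n,k}}w(\vec\ell)\,t^{\sigma(\vec\ell)}$, with $\theta_{n;0}(t)=1$. *)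

From HB Require Import structures.
From mathcomp Require Import all_boot all_order all_algebra.
Set Implicit Arguments. Unset Strict Implicit. Unset Printing Implicit Defensive.
Import Order.TTheory GRing.Theory Num.Theory.
Local Open Scope ring_scope.

Definition sigma (s : seq nat) : nat :=
  match s with
  | [::] => 0%N
  | x :: s' => count id (pairmap (fun u v => u == v) x s')
  end.

Definition inM (n k : nat) (l : k.-tuple 'I_n.+1) : bool :=
  sorted (fun x y => (y <= x)%N) (map val l) && all (fun x => (0 < x)%N) (map val l).

Definition theta_nk (R : comNzRingType) (a : nat -> R) (n k : nat) (t : R) : R :=
  \sum_(l : k.-tuple 'I_n.+1 | inM l)
     (\prod_(x <- l) a (val x)) * t ^+ sigma (map val l).

(* complete homogeneous symmetric polynomial h_j(a_1,...,a_n):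
   sum over multisets of size j of {1..n}, encoded as nondecreasing j-tuples *)
Definition hom_sym (R : comNzRingType) (a : nat -> R) (n j : nat) : R :=
  \sum_(m : j.-tuple 'I_n | sorted leq (map val m)) \prod_(i <- m) a (val i).+1.

Definition elem_sym (R : comNzRingType) (a : nat -> R) (n j : nat) : R :=
  \sum_(S : {set 'I_n} | #|S| == j) \prod_(i in S) a (val i).+1.

From HB Require Import structures.
From mathcomp Require Import all_boot all_order all_algebra.
From mathcomp Require Import ring.
Import Order.TTheory GRing.Theory Num.Theory.
Set Implicit Arguments. Unset Strict Implicit.
Local Open Scope ring_scope.

(* Write dsum_t(k, b) for theta_{n;k}(t) with n = b, i.e. the sum of the
   weights  prod_j a_{l_j} * t^sigma(l)  over weakly decreasing sequences
   l of length k with entries in 1..b.  These sequences are enumerated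
   explicitly by [decseq k b], and splitting off the sequences that start
   with b+1 gives the recursion
     dsum_t(k+1, b+1) = dsum_t(k+1, b) + a_{b+1} (1-t) dsum_t(k, b)
                        + a_{b+1} t dsum_t(k, b+1).
   In terms of the generating series in x (truncated at x^N), with
   c = a_{b+1} t and d = a_{b+1} (1-t), this says
     D_{b+1} (1 - c x) = D_b (1 + d x),  H_{b+1} (1 - c x) = H_b,
     E_{b+1} = E_b (1 + d x)
   for D_b = sum_k dsum_t(k,b) x^k, H_b = sum_k t^k dsum_1(k,b) x^k and
   E_b = sum_k (1-t)^k dsum_0(k,b) x^k; since 1 - c x is invertible,
   induction on b gives D_b = H_b E_b, whose coefficient of x^k is the
   convolution formula. *)

Fixpoint decseq (k b : nat) : seq (seq nat) :=
  if k is k'.+1 then [seq x :: s | x <- iota 1 b, s <- decseq k' x] else [:: [::]].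

Definition in_range (b x : nat) : bool := (0 < x <= b)%N.

Lemma mem_decseq k b s :
  (s \in decseq k b) = [&& size s == k, sorted geq s & all (in_range b) s].
Proof.
elim: k b s => [|k IH] b [|x s] //=; first by apply/allpairsPdep => -[y [r [_ _]]].
have -> : (x :: s \in decseq k.+1 b) = (x \in iota 1 b) && (s \in decseq k x).
  by apply/allpairsPdep/andP => [[y [r [? ? [-> ->]]]] | []] //; exists x, s.
rewrite mem_iota add1n ltnS IH eqSS path_sortedE; last first.
  by move=> ? ? ? /= h1 h2; apply: leq_trans h2 h1.
rewrite [in_range b x]/in_range; case: (boolP (0 < x <= b)%N) => [xb|_]; last by rewrite !andbF.
have -> : all (in_range x) s = all (geq x) s && all (in_range b) s.
  rewrite -all_predI; apply: eq_all => y; rewrite /in_range /=.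
  case/andP: xb => _ xb.
  by case: (leqP y x) => [yx|_]; [rewrite (leq_trans yx xb) | ]; rewrite ?andbT ?andbF.
by rewrite !andTb; congr (_ && _); rewrite andbA [X in X && _]andbC.
Qed.

Lemma decseq_head k b s : s \in decseq k b -> (Some b.+1 == ohead s) = false.
Proof.
rewrite mem_decseq /in_range => /and3P[_ _]; case: s => [//|x s] /= /andP[/andP[_ xb] _].
by apply/eqP => -[e]; rewrite -e ltnn in xb.
Qed.

Lemma uniq_decseq k b : uniq (decseq k b).
Proof.
elim: k b => [|k IH] b //=.
apply: allpairs_uniq_dep => [||[x s] [y r] _ _ [-> ->]] //; exact: iota_uniq.
Qed.

Lemma decseqS k b :
  decseq k.+1 b.+1 = decseq k.+1 b ++ [seq b.+1 :: s | s <- decseq k b.+1].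
Proof.
have -> : decseq k.+1 b.+1 = [seq x :: s | x <- iota 1 (b + 1), s <- decseq k x].
  by rewrite addn1.
by rewrite iotaD allpairs_cat /= cats0 add1n.
Qed.

Lemma sigma_cons x s : sigma (x :: s) = ((Some x == ohead s) + sigma s)%N.
Proof. by case: s. Qed.

Section Weights.
Variables (R : comNzRingType) (a : nat -> R) (t : R).

Definition wt (s : seq nat) : R := (\prod_(x <- s) a x) * t ^+ sigma s.

Lemma wt_cons x s : wt (x :: s) = a x * t ^+ (Some x == ohead s) * wt s.
Proof. by rewrite /wt sigma_cons big_cons exprD; ring. Qed.

Definition dsum (k b : nat) : R := \sum_(s <- decseq k b) wt s.

Lemma dsum0 b : dsum 0 b = 1.
Proof. by rewrite /dsum big_seq1 /wt big_nil mul1r. Qed.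

Lemma dsumS0 k : dsum k.+1 0 = 0.
Proof. by rewrite /dsum big_nil. Qed.

Lemma dsum_b0 k : dsum k 0 = (k == 0%N)%:R.
Proof. by case: k => [|k]; rewrite ?dsum0 ?dsumS0. Qed.

Lemma dsum_split k b :
  dsum k.+1 b.+1 = dsum k.+1 b + \sum_(s <- decseq k b.+1) wt (b.+1 :: s).
Proof. by rewrite /dsum decseqS big_cat big_map. Qed.

(* The sum over [decseq k (b+1)] weighted by the extra factor t^(s starts
   with b+1): the sequences starting with b+1 are dsum k b.+1 - dsum k b. *)
Lemma dsum_head k b :
  \sum_(s <- decseq k b.+1) t ^+ (Some b.+1 == ohead s) * wt s =
  dsum k b + t * (dsum k b.+1 - dsum k b).
Proof.
case: k => [|k]; first by rewrite !dsum0 subrr mulr0 addr0 big_seq1 /wt big_nil /= !mul1r.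
rewrite (dsum_split k b) [_ + _ - _]addrC addKr decseqS big_cat big_map mulr_sumr.
congr (_ + _); last by apply: eq_bigr => s _; rewrite /= eqxx expr1.
rewrite /dsum big_seq [RHS]big_seq; apply: eq_bigr => s /decseq_head ->.
by rewrite mul1r.
Qed.

Lemma dsum_rec k b :
  dsum k.+1 b.+1 =
  dsum k.+1 b + a b.+1 * (1 - t) * dsum k b + a b.+1 * t * dsum k b.+1.
Proof.
rewrite dsum_split; under eq_bigr do rewrite wt_cons -mulrA.
by rewrite -mulr_sumr dsum_head; ring.
Qed.

End Weights.

Lemma big_bij_seq (V : nmodType) (T1 T2 : eqType) (r1 : seq T1) (r2 : seq T2)
    (f : T1 -> T2) (g : T2 -> T1) (F : T2 -> V) :
  uniq r1 -> uniq r2 -> {in r1, cancel f g} -> {in r1, forall x, f x \in r2} ->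
  {in r2, forall y, g y \in r1 /\ f (g y) = y} ->
  \sum_(x <- r1) F (f x) = \sum_(y <- r2) F y.
Proof.
move=> u1 u2 fK fr1 gr2; rewrite -(big_map f xpredT F); apply/perm_big/uniq_perm => //.
  by rewrite (map_inj_in_uniq (can_in_inj fK)).
move=> y; apply/mapP/idP => [[x xr1 ->]|yr2]; first exact: fr1.
by have [gy fgy] := gr2 y yr2; exists (g y).
Qed.

Definition tuple_seqs (M k : nat) : seq (seq nat) :=
  map (fun l : k.-tuple 'I_M => map val l) (enum {: k.-tuple 'I_M}).

Lemma big_tuple_seqs (V : nmodType) M k (P : pred (seq nat)) (F : seq nat -> V) :
  \sum_(l : k.-tuple 'I_M | P (map val l)) F (map val l) =
  \sum_(s <- tuple_seqs M k | P s) F s.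
Proof. by rewrite /tuple_seqs big_map big_enum_cond. Qed.

Lemma uniq_tuple_seqs M k : uniq (tuple_seqs M k).
Proof.
rewrite map_inj_uniq ?enum_uniq // => l1 l2 e.
exact/val_inj/(inj_map val_inj).
Qed.

Lemma mem_tuple_seqs M k s :
  (s \in tuple_seqs M k) = (size s == k) && all (gtn M) s.
Proof.
apply/mapP/andP => [[l _ ->]|[/eqP sz /allP sM]].
  by rewrite size_map size_tuple; split=> //; apply/allP => _ /mapP[i _ ->]; exact: ltn_ord.
have ss : map val (pmap insub s : seq 'I_M) = s.
  by rewrite (pmap_filter (insubK _)) (eq_filter (isSome_insub _)); apply/all_filterP/allP.
have sz' : size (pmap insub s : seq 'I_M) == k by rewrite -(size_map val) ss sz.
by exists (Tuple sz'); rewrite ?mem_enum //= ss.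
Qed.

Lemma theta_dsum (R : comNzRingType) (a : nat -> R) n k t :
  theta_nk a n k t = dsum a t k n.
Proof.
rewrite /theta_nk /inM; under eq_bigr do rewrite -(big_map val xpredT a).
rewrite (big_tuple_seqs _ _ (fun s => sorted geq s && all (leq 1) s) (wt a t)).
rewrite -big_filter; apply/perm_big/uniq_perm.
- by rewrite filter_uniq ?uniq_tuple_seqs.
- exact: uniq_decseq.
move=> s; rewrite mem_filter mem_tuple_seqs mem_decseq andbC -andbA; congr (_ && _).
- rewrite andbC -andbA; congr (_ && _); rewrite -all_predI.
  by apply: eq_all => x; rewrite /in_range /= andbC.
Qed.

Lemma rev_succ_decseq k n s :
  (rev (map succn s) \in decseq k n) = [&& size s == k, sorted leq s & all (gtn n) s].
Proof.
rewrite mem_decseq size_rev size_map rev_sorted sorted_map all_rev all_map.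
by congr [&& _, _ & _].
Qed.

Lemma hom_dsum (R : comNzRingType) (a : nat -> R) n k :
  hom_sym a n k = dsum a 1 k n.
Proof.
pose f s := rev (map succn s); pose g s := map predn (rev s).
have fgK y : y \in decseq k n -> f (g y) = y.
  rewrite mem_decseq => /and3P[_ _ /allP yr]; rewrite /f /g -map_comp map_id_in ?revK //.
  by move=> x; rewrite mem_rev => /yr /andP[x0 _]; apply: prednK.
rewrite /hom_sym; under eq_bigr do rewrite -(big_map val xpredT (fun x => a x.+1)).
rewrite (big_tuple_seqs _ _ (sorted leq) (fun s => \prod_(x <- s) a x.+1)) -big_filter.
rewrite (eq_bigr (fun s => wt a 1 (f s))) => [|s _]; last first.
  by rewrite /wt /= expr1n mulr1 big_rev big_map.
apply: (big_bij_seq (f := f) (g := g)); rewrite ?filter_uniq ?uniq_tuple_seqs ?uniq_decseq //.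
- by move=> s _; rewrite /f /g revK (mapK succnK).
- by move=> s; rewrite mem_filter mem_tuple_seqs rev_succ_decseq andbCA.
- by move=> y yd; rewrite mem_filter mem_tuple_seqs andbCA -rev_succ_decseq -/(f (g y)) fgK.
Qed.

Lemma path_gtn_sigma x s : path gtn x s = path geq x s && (sigma (x :: s) == 0%N).
Proof.
elim: s x => [//|y r IH] x.
rewrite (sigma_cons x) [path gtn _ _]/= IH [path geq _ _]/= addn_eq0 [ohead _]/=.
rewrite ltn_neqAle [y == x]eq_sym -(inj_eq Some_inj).
by case: (Some x == Some y); rewrite ?andbF //= andbA.
Qed.

Lemma dsum_at0 (R : comNzRingType) (a : nat -> R) k b :
  dsum a 0 k b = \sum_(s <- decseq k b | sorted gtn s) \prod_(x <- s) a x.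
Proof.
rewrite big_mkcond /dsum !big_seq; apply: eq_bigr => s.
rewrite mem_decseq => /and3P[_ sd _].
have -> : sorted gtn s = (sigma s == 0%N).
  by case: s sd => //= x r; rewrite path_gtn_sigma => ->.
by rewrite /wt expr0n; case: (sigma s == 0%N); rewrite ?mulr1 ?mulr0.
Qed.

Section SubsetsAsSequences.
Variable n : nat.

Definition set_seq (S : {set 'I_n}) : seq nat := sort geq [seq (val i).+1 | i <- enum S].

Definition seq_set (s : seq nat) : {set 'I_n} := [set i | (val i).+1 \in s].

Lemma succ_val_inj : injective (fun i : 'I_n => (val i).+1).
Proof. by move=> i j [/val_inj]. Qed.

Lemma mem_set_seq S (i : 'I_n) : ((val i).+1 \in set_seq S) = (i \in S).
Proof. by rewrite mem_sort (mem_map succ_val_inj) mem_enum. Qed.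

Lemma size_set_seq S : size (set_seq S) = #|S|.
Proof. by rewrite size_sort size_map cardE. Qed.

Lemma sorted_set_seq S : sorted gtn (set_seq S).
Proof.
rewrite gtn_sorted_uniq_geq sort_uniq (map_inj_uniq succ_val_inj) enum_uniq /=.
by apply: sort_sorted => x y; apply: leq_total.
Qed.

Lemma set_seq_range S : all (in_range n) (set_seq S).
Proof. by apply/allP => x; rewrite mem_sort => /mapP[i _ ->]; rewrite /in_range /=. Qed.

Lemma set_seqK : cancel set_seq seq_set.
Proof. by move=> S; apply/setP => i; rewrite inE mem_set_seq. Qed.

Lemma seq_setK s : sorted gtn s -> all (in_range n) s -> set_seq (seq_set s) = s.
Proof.
move=> sg /allP sr.
have gtn_trans : transitive gtn by move=> y x z /= h1 h2; apply: ltn_trans h2 h1.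
apply: (irr_sorted_eq gtn_trans ltnn (sorted_set_seq _) sg).
move=> x; rewrite mem_sort; apply/mapP/idP => [[i]|xs]; first by rewrite mem_enum inE => ? ->.
have /andP[x0 xn] := sr x xs; have xn' : (x.-1 < n)%N by rewrite prednK.
by exists (Ordinal xn'); rewrite ?mem_enum ?inE /= prednK.
Qed.

End SubsetsAsSequences.

Lemma elem_dsum (R : comNzRingType) (a : nat -> R) n k :
  elem_sym a n k = dsum a 0 k n.
Proof.
have prodE (S : {set 'I_n}) : \prod_(i in S) a (val i).+1 = \prod_(x <- set_seq S) a x.
  by rewrite /set_seq (perm_big _ (introT permPl (perm_sort _ _))) big_map big_enum.
rewrite dsum_at0 -big_filter /elem_sym (eq_bigr _ (fun S _ => prodE S)) -big_filter.
apply: (big_bij_seq (f := @set_seq n) (g := @seq_set n)).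
- by rewrite filter_uniq ?index_enum_uniq.
- by rewrite filter_uniq ?uniq_decseq.
- by move=> S _; apply: set_seqK.
- move=> S; rewrite !mem_filter mem_decseq size_set_seq set_seq_range sorted_set_seq.
  by case/andP=> -> _; rewrite (sub_sorted _ (sorted_set_seq S)) // => x y /ltnW.
move=> s; rewrite !mem_filter mem_decseq => /andP[sg /and3P[/eqP sz _ sr]].
by rewrite mem_index_enum -size_set_seq seq_setK // sz eqxx.
Qed.

Section Truncation.
Variables (R : comNzRingType) (N : nat).

Lemma take_polyMr (p q : {poly R}) : take_poly N (p * take_poly N q) = take_poly N (p * q).
Proof.
rewrite -[in RHS](poly_take_drop N q) mulrDr take_polyD mulrA take_polyMXn_0.
by rewrite addr0.
Qed.

Lemma take_polyMl (p q : {poly R}) : take_poly N (take_poly N p * q) = take_poly N (p * q).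
Proof. by rewrite mulrC take_polyMr mulrC. Qed.

Lemma coefM_1addX (p : {poly R}) c i :
  (p * (1 + c%:P * 'X))`_i = p`_i + (if i is i'.+1 then c * p`_i' else 0).
Proof.
rewrite mulrDr mulr1 coefD mulrA coefMX coefMC.
by case: i => [|i] //=; rewrite mulrC.
Qed.

(* 1 + c x is invertible modulo x^N, hence cancellable. *)
Lemma take_poly_cancel (p q : {poly R}) c :
  take_poly N (p * (1 + c%:P * 'X)) = take_poly N (q * (1 + c%:P * 'X)) ->
  take_poly N p = take_poly N q.
Proof.
move=> e; apply/polyP => i; rewrite !coef_take_poly; case: ltnP => // iN.
have eqi j : (j < N)%N -> (p * (1 + c%:P * 'X))`_j = (q * (1 + c%:P * 'X))`_j.
  by move=> jN; have := congr1 (fun r : {poly R} => r`_j) e; rewrite /= !coef_take_poly jN.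
elim: i iN => [|i IH] iN; first by have := eqi 0%N iN; rewrite !coefM_1addX !addr0.
by have := eqi i.+1 iN; rewrite !coefM_1addX IH ?(ltnW iN) // => /addIr.
Qed.

End Truncation.

Section Convolution.
Variables (R : comNzRingType) (a : nat -> R) (t : R) (N : nat).

Definition hseries b : {poly R} := \poly_(j < N) (t ^+ j * dsum a 1 j b).
Definition eseries b : {poly R} := \poly_(j < N) ((1 - t) ^+ j * dsum a 0 j b).
Definition dseries b : {poly R} := \poly_(j < N) dsum a t j b.

Lemma hseries_rec b :
  take_poly N (hseries b.+1 * (1 + (- (a b.+1 * t))%:P * 'X)) = hseries b.
Proof.
apply/polyP => i; rewrite /hseries coef_take_poly coefM_1addX !coef_poly.
case: ltnP => // iN; case: i iN => [|i] iN; first by rewrite addr0 !dsum0.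
by rewrite coef_poly (ltnW iN) dsum_rec !exprS; ring.
Qed.

Lemma eseries_rec b :
  eseries b.+1 = take_poly N (eseries b * (1 + (a b.+1 * (1 - t))%:P * 'X)).
Proof.
apply/polyP => i; rewrite /eseries coef_take_poly coefM_1addX !coef_poly.
case: ltnP => // iN; case: i iN => [|i] iN; first by rewrite addr0 !dsum0.
by rewrite coef_poly (ltnW iN) dsum_rec !exprS; ring.
Qed.

Lemma dseries_rec b :
  take_poly N (dseries b.+1 * (1 + (- (a b.+1 * t))%:P * 'X)) =
  take_poly N (dseries b * (1 + (a b.+1 * (1 - t))%:P * 'X)).
Proof.
apply/polyP => i; rewrite /dseries !coef_take_poly !coefM_1addX !coef_poly.
case: ltnP => // iN; case: i iN => [|i] iN; first by rewrite !addr0 !dsum0.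
by rewrite !coef_poly (ltnW iN) dsum_rec; ring.
Qed.

Lemma dseries_conv b : dseries b = take_poly N (hseries b * eseries b).
Proof.
elim: b => [|b IH].
  have base c s : \poly_(j < N) (c ^+ j * dsum a s j 0) = take_poly N 1.
    apply/polyP => i; rewrite coef_poly coef_take_poly coef1 dsum_b0.
    by case: (i < N)%N => //; case: i => [|i]; rewrite ?mulr1 ?mulr0.
  rewrite /hseries /eseries !base take_polyMl take_polyMr mulr1 -(base 1 t).
  by apply: eq_poly => j _; rewrite expr1n mul1r.
rewrite -[LHS](take_poly_id (size_poly _ _)).
apply: (take_poly_cancel (c := - (a b.+1 * t))).
rewrite dseries_rec IH take_polyMl -mulrA -take_polyMr -eseries_rec.
by rewrite [in RHS]mulrAC -[in RHS]take_polyMl hseries_rec.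
Qed.

End Convolution.

Lemma dsum_convolution (R : comNzRingType) (a : nat -> R) t k b :
  dsum a t k b =
  \sum_(j < k.+1) t ^+ j * dsum a 1 j b * (1 - t) ^+ (k - j) * dsum a 0 (k - j) b.
Proof.
have := congr1 (fun p : {poly R} => p`_k) (dseries_conv a t k.+1 b).
rewrite /= coef_poly coef_take_poly coefM ltnSn => ->; apply: eq_bigr => j _.
by rewrite !coef_poly ltn_ord ltnS leq_subr mulrA.
Qed.

Theorem mainTheorem2 (R : realFieldType) (a : nat -> R)
  (apos : forall j : nat, (1 <= j)%N -> 0 < a j) (n k : nat) (t : R) :
  (1 <= n)%N ->
  theta_nk a n k t =
    \sum_(j < k.+1)
       t ^+ j * theta_nk a n j 1 * (1 - t) ^+ (k - j) * theta_nk a n (k - j) 0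
  /\ (forall j : nat, theta_nk a n j 1 = hom_sym a n j)
  /\ (forall j : nat, theta_nk a n j 0 = elem_sym a n j).
Proof.
move=> _; split; last split=> j; rewrite theta_dsum ?hom_dsum ?elem_dsum //.
by rewrite dsum_convolution; apply: eq_bigr => j _; rewrite !theta_dsum.
Qed.
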